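(* For the closed compartmental reaction-diffusion system $$\dot X=-\big(( *_0)^{-1}\otimes I_m\big)(\mathbf{d}\otimes I_m)^{\mathrm{T}}( *_1\otimes I_m)R_d(X)(\mathbf{d}\otimes I_m)\frac{X}{X^*}+F(X),$$ with all objects as described in the context, the positive orthant $\mathbb{R}_+^{mN}$ (vectors with all entries strictly positive) is forward invariant.
   Context: Reaction network: $m$ species, $c$ complexes, $r$ reactions; $Z$ is the $m\times c$ complex stoichiometric matrix (nonnegative integer entries); $B$ is the $c\times r$ incidence matrix of the directed complex graph; $x^*\in\mathbb{R}_+^m$ is a thermodynamic equilibrium and $\mathcal{K}(x^* )=\mathrm{diag}(\kappa_1,\dots,\kappa_r)$ with all $\kappa_j>0$. The reaction vector field is $f(x)=-ZB\mathcal{K}(x^* )B^{\mathrm{T}}\mathrm{Exp}\big(Z^{\mathrm{T}}\mathrm{Ln}(x/x^* )\big)$, with $\mathrm{Ln}$, $\mathrm{Exp}$ componentwise and $x/x^*$ the componentwise quotient (extended to $\bar{\mathbb{R}}_+^m$ via the monomial form $\prod_i(x_i/x_i^* )^{Z_{i\rho}}$). Spatial discretization: a simplicial triangulation $K$ with $N$ vertices and $N_e$ edges; $\mathbf{d}$ is the $N_e\times N$ transpose of the oriented vertex-edge incidence matrix of the 1-skeleton; $*_0$ ($N\times N$) and $*_1$ ($N_e\times N_e$) are positive diagonal matrices. $X=((x^1)^{\mathrm{T}},\dots,(x^N)^{\mathrm{T}})^{\mathrm{T}}$, $X^*=((x^* )^{\mathrm{T}},\dots,(x^* )^{\mathrm{T}})^{\mathrm{T}}$,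 $F(X)=(f(x^1)^{\mathrm{T}},\dots,f(x^N)^{\mathrm{T}})^{\mathrm{T}}$. $R_d(X)$ is an $mN_e\times mN_e$ diagonal matrix with $R_d(X)\ge\alpha I$ for some $\alpha>0$, depending continuously differentiably on $X$. *)

From HB Require Import structures.
From mathcomp Require Import all_boot all_order all_algebra.
From mathcomp Require Import all_classical all_reals all_analysis.
From mathcomp Require Import mxtens.

Set Implicit Arguments.
Unset Strict Implicit.
Unset Printing Implicit Defensive.

Import Order.TTheory GRing.Theory Num.Theory.
Local Open Scope ring_scope.

(* Kronecker product: (A *t B) (i*p + k, j*q + l) = A i j * B k l
   (from mathcomp-real-closed's mxtens: mxtens_index (i,k) = i * p + k). *)
Notation "A *t B" := (tensmx A B)
  (at level 40, left associativity, format "A  *t  B").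

Section Defs.
Variable R : realType.

(* M (p x q) is the incidence matrix of a directed graph with p vertices and
   q edges: column j has a +1 at the target vertex, a -1 at the source
   vertex (source <> target), and 0 elsewhere. *)
Definition is_digraph_incidence (p q : nat) (M : 'M[R]_(p, q)) : Prop :=
  forall j : 'I_q, exists (s t : 'I_p), s != t /\
    forall i : 'I_p, M i j = (i == t)%:R - (i == s)%:R.

Definition cwdiv (n : nat) (x y : 'cV[R]_n) : 'cV[R]_n :=
  map2_mx (fun a b => a / b) x y.

(* the vector Exp(Z^T Ln(x/xs)) written in its monomial form:
   component rho is prod_i (x_i / xs_i)^(Z_{i rho}) *)
Definition monomials (m c : nat) (Z : 'M[nat]_(m, c)) (xs x : 'cV[R]_m)
  : 'cV[R]_c :=
  \col_(rho < c) \prod_(i < m) (x i 0 / xs i 0) ^+ (Z i rho).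

Definition reaction_field (m c r : nat) (Z : 'M[nat]_(m, c))
  (B : 'M[R]_(c, r)) (kappa : 'rV[R]_r) (xs : 'cV[R]_m) (x : 'cV[R]_m)
  : 'cV[R]_m :=
  - (map_mx (fun k : nat => k%:R) Z *m B *m diag_mx kappa *m B^T)
      *m monomials Z xs x.

Definition block (N m : nat) (X : 'cV[R]_(N * m)) (v : 'I_N) : 'cV[R]_m :=
  \col_(i < m) X (mxtens_index (v, i)) 0.

Definition stack_apply (N m : nat) (g : 'cV[R]_m -> 'cV[R]_m)
  (X : 'cV[R]_(N * m)) : 'cV[R]_(N * m) :=
  \col_(k < N * m) g (block X (mxtens_unindex k).1) (mxtens_unindex k).2 0.

Definition stack_const (N m : nat) (xs : 'cV[R]_m) : 'cV[R]_(N * m) :=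
  \col_(k < N * m) xs (mxtens_unindex k).2 0.

Definition rd_field (m c r N Ne : nat) (Z : 'M[nat]_(m, c))
  (B : 'M[R]_(c, r)) (kappa : 'rV[R]_r) (xs : 'cV[R]_m)
  (d : 'M[R]_(Ne, N)) (s0 : 'rV[R]_N) (s1 : 'rV[R]_Ne)
  (Rd : 'cV[R]_(N * m) -> 'M[R]_(Ne * m)) (X : 'cV[R]_(N * m))
  : 'cV[R]_(N * m) :=
  - ((invmx (diag_mx s0) *t (1%:M : 'M[R]_m))
      *m (d *t (1%:M : 'M[R]_m))^T
      *m (diag_mx s1 *t (1%:M : 'M[R]_m))
      *m Rd X
      *m (d *t (1%:M : 'M[R]_m))
      *m cwdiv X (@stack_const N m xs))
  + @stack_apply N m (reaction_field Z B kappa xs) X.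

End Defs.

From HB Require Import structures.
From mathcomp Require Import all_boot all_order all_algebra.
From mathcomp Require Import all_classical all_reals all_analysis.
From mathcomp Require Import mxtens ring lra.

Set Implicit Arguments.
Unset Strict Implicit.
Unset Printing Implicit Defensive.

Import Order.TTheory GRing.Theory Num.Theory numFieldNormedType.Exports.
Local Open Scope ring_scope.
Local Open Scope classical_set_scope.

(** The vector field is quasi-positive: for a nonnegative state Y, the
  component of the right-hand side at species i of compartment v is at least
  [- Y_(v,i) * h_(v,i)(Y)] for a continuous loss rate [h] (diffusion can only
  remove what is in the compartment, and every reaction monomial consuming
  species i contains the factor x_i).  Along the solution, [h] is bounded by
  some G on the compact interval [0, T], so [exp(G t) * X_k(t)] is
  nondecreasing as long as X stays nonnegative; hence no component can reach
  0, and a continuation argument on the supremum of the positivity interval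
  gives positivity on all of [0, T]. *)

Section IncidenceColumn.
Variable R : realDomainType.

Definition incidence_column n (a : 'I_n -> R) : Prop :=
  exists s t : 'I_n, s != t /\ forall w, a w = (w == t)%:R - (w == s)%:R.

Lemma sum_delta_mul n (t : 'I_n) (F : 'I_n -> R) :
  \sum_(w < n) (w == t)%:R * F w = F t.
Proof.
rewrite (bigD1 t) //= eqxx mul1r big1 ?addr0 // => w /negbTE ->; exact: mul0r.
Qed.

Lemma sum_incidence_mul n (s t : 'I_n) (F : 'I_n -> R) :
  \sum_(w < n) ((w == t)%:R - (w == s)%:R) * F w = F t - F s.
Proof. by under eq_bigr do rewrite mulrBl; rewrite sumrB !sum_delta_mul. Qed.

Lemma sum_abs_incidence_mul n (s t : 'I_n) (F : 'I_n -> R) : s != t ->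
  \sum_(w < n) `|(w == t)%:R - (w == s)%:R| * F w = F t + F s.
Proof.
move=> st; rewrite -[F t]sum_delta_mul -[F s]sum_delta_mul -big_split /=.
apply: eq_bigr => w _; rewrite -mulrDl; congr (_ * _).
have [->|wt] := eqVneq w t.
  by rewrite eq_sym (negbTE st) subr0 normr1 addr0.
by case: (w == s); rewrite ?sub0r ?subr0 ?normrN ?normr1 ?normr0 add0r.
Qed.

Lemma incidence_mul_sum_le n (a u : 'I_n -> R) (v : 'I_n) :
  incidence_column a -> (forall w, 0 <= u w) ->
  a v * (\sum_(w < n) a w * u w) <= u v.
Proof.
move=> [s [t [st aE]]] u0; have -> : a = fun w => (w == t)%:R - (w == s)%:R.
  by apply/funext => w; exact: aE.
rewrite sum_incidence_mul; have [->|vt] := eqVneq v t.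
  by rewrite eq_sym (negbTE st) /=; have := u0 s; lra.
have [->|vs] := eqVneq v s; first by rewrite /=; have := u0 t; lra.
by rewrite subrr mul0r; exact: u0.
Qed.

Lemma incidence_sum_mul_le n (a z mu : 'I_n -> R) : incidence_column a ->
  (forall w, 0 <= z w) -> (forall w, 0 <= mu w) ->
  (\sum_(w < n) a w * z w) * (\sum_(w < n) a w * mu w)
  <= \sum_(w < n) `|a w| * (z w * mu w).
Proof.
move=> [s [t [st aE]]] z0 mu0; have -> : a = fun w => (w == t)%:R - (w == s)%:R.
  by apply/funext => w; exact: aE.
rewrite !sum_incidence_mul sum_abs_incidence_mul //.
have := z0 s; have := z0 t; have := mu0 s; have := mu0 t; nra.
Qed.

End IncidenceColumn.

Section MatrixEntries.
Variable R : comPzRingType.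

Lemma sum_mxtens_index p q (F : 'I_(p * q) -> R) :
  \sum_l F l = \sum_(a < p) \sum_(b < q) F (mxtens_index (a, b)).
Proof.
rewrite pair_big /= (reindex (@mxtens_index p q)) /=; last first.
  by exists (@mxtens_unindex p q) => x _;
    rewrite (mxtens_indexK, mxtens_unindexK).
by apply: eq_bigr => -[a b].
Qed.

Lemma mul_tensmx1E p n m q (A : 'M[R]_(p, n)) (y : 'M[R]_(n * m, q)) v i j :
  ((A *t (1%:M : 'M[R]_m)) *m y) (mxtens_index (v, i)) j
  = \sum_(w < n) A v w * y (mxtens_index (w, i)) j.
Proof.
rewrite mxE sum_mxtens_index; apply: eq_bigr => w _.
rewrite (bigD1 i) //= big1 ?addr0 => [|k /negbTE ki].
  by rewrite tensmxE mxE eqxx mulr1.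
by rewrite tensmxE mxE eq_sym ki mulr0 mul0r.
Qed.

Lemma sum_diag_mx_mul n (s : 'rV[R]_n) v (F : 'I_n -> R) :
  \sum_w diag_mx s v w * F w = s 0 v * F v.
Proof.
rewrite (bigD1 v) //= big1 ?addr0 => [|w /negbTE wv]; first by rewrite mxE eqxx.
by rewrite mxE eq_sym wv mulr0n mul0r.
Qed.

Lemma mulmx_diag_trmxE m c r (A : 'M[R]_(m, c))
    (B : 'M[R]_(c, r)) (k : 'rV[R]_r) (u : 'cV[R]_c) i :
  (A *m B *m diag_mx k *m B^T *m u) i 0
  = \sum_j k 0 j * ((A *m B) i j * (B^T *m u) j 0).
Proof.
rewrite -!mulmxA mulmxA mxE; apply: eq_bigr => j _.
by rewrite mul_diag_mx mxE mulrCA.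
Qed.

End MatrixEntries.

Section DiagonalScaling.
Variable R : fieldType.

Lemma invmx_diag n (s : 'rV[R]_n) : (forall v, s 0 v != 0) ->
  invmx (diag_mx s) = diag_mx (\row_v (s 0 v)^-1).
Proof.
move=> s_neq0; have s_unit : diag_mx s \in unitmx.
  by rewrite unitmxE det_diag unitfE; apply/prodf_neq0 => v _.
have sV : diag_mx s *m diag_mx (\row_v (s 0 v)^-1) = 1%:M.
  by rewrite mulmx_diag; apply/matrixP => i j; rewrite !mxE divff.
by rewrite -[RHS]mul1mx -(mulVmx s_unit) -mulmxA sV mulmx1.
Qed.

Lemma diffusion_entry N Ne m (d : 'M[R]_(Ne, N)) (s0 : 'rV[R]_N)
    (s1 : 'rV[R]_Ne) (M : 'M[R]_(Ne * m)) (y : 'cV[R]_(N * m)) v i :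
  (forall v, s0 0 v != 0) -> is_diag_mx M ->
  ((invmx (diag_mx s0) *t (1%:M : 'M[R]_m)) *m (d *t (1%:M : 'M[R]_m))^T
      *m (diag_mx s1 *t (1%:M : 'M[R]_m)) *m M *m (d *t (1%:M : 'M[R]_m))
      *m y) (mxtens_index (v, i)) 0
  = (s0 0 v)^-1 * \sum_e d e v * (s1 0 e * M (mxtens_index (e, i))
      (mxtens_index (e, i)) * \sum_(w < N) d e w * y (mxtens_index (w, i)) 0).
Proof.
move=> s0_neq0 /diag_mxP[dM ->].
rewrite -!mulmxA invmx_diag // mul_tensmx1E sum_diag_mx_mul mxE; congr (_ * _).
rewrite trmx_tens trmx1 mul_tensmx1E; apply: eq_bigr => e _.
rewrite mxE mul_tensmx1E sum_diag_mx_mul mul_diag_mx mxE mul_tensmx1E.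
by rewrite [diag_mx dM _ _]mxE eqxx mulr1n !mulrA.
Qed.

End DiagonalScaling.

Section RealAnalysis.
Variable R : realType.

Lemma cvg_mx_entrywise (T : Type) (F : set_system T) {FF : Filter F} m n
    (f : T -> 'M[R]_(m, n)) (M : 'M[R]_(m, n)) :
  (forall i j, (fun t => f t i j) @ F --> M i j) -> f @ F --> M.
Proof.
move=> f_cvg A [P MP sPA]; apply: (filterS (fun t Pt => sPA _ Pt)).
apply: filter_forall => i; apply: filter_forall => j.
exact: (f_cvg i j _ (MP i j)).
Qed.

Lemma continuous_bounded_above_itv (f : R -> R) (a b : R) :
  {within `[a, b], continuous f} -> exists G, forall s, a <= s <= b -> f s <= G.
Proof.
move=> f_cont; have [ab|ba] := leP a b.
  have [c _ f_le] := EVT_max ab f_cont.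
  by exists (f c) => s sab; apply: f_le; rewrite in_itv.
by exists 0 => s /andP[a_le_s s_le_b]; lra.
Qed.

Lemma is_derive_expR_mull (G s : R) :
  is_derive s 1 (fun u : R => expR (G * u)) (expR (G * s) * G).
Proof.
have lin : is_derive s 1 (fun u : R => G * u) G.
  have := @is_deriveZ R R^o R^o id G s 1 1 (is_derive_id _ _).
  by move=> h; apply: (is_derive_eq h); exact: mulr1.
exact: is_derive1_comp (is_derive_expR _) lin.
Qed.

Lemma derive_ge_linear_gt0 (x x' : R -> R) (G a b : R) : a <= b ->
  {within `[a, b], continuous x} ->
  (forall s, a < s < b -> is_derive s 1 x (x' s)) ->
  (forall s, a < s < b -> - (G * x s) <= x' s) ->
  0 < x a -> 0 < x b.
Proof.
move=> ab x_cont x_derive x'_ge x_a_gt0.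
pose phi s := expR (G * s) * x s.
have phi_derive s : a < s < b ->
    is_derive s 1 phi (expR (G * s) * x' s + x s * (expR (G * s) * G)).
  move=> sab; apply: is_deriveM; last exact: x_derive.
  exact: is_derive_expR_mull.
have phi_cont : {within `[a, b], continuous phi}.
  apply/subspace_continuousP => s sab; apply: cvgM; last first.
    by move/subspace_continuousP : x_cont; apply.
  apply: cvg_within_filter; have [e_derivable _] := is_derive_expR_mull G s.
  exact: differentiable_continuous (proj1 (derivable1_diffP _ _) e_derivable).
have : phi a <= phi b.
  apply: (ger0_derive1_ndecr _ _ phi_cont (lexx a) ab (lexx b)).
  - by move=> s; rewrite in_itv /= => /phi_derive[].
  - move=> s; rewrite in_itv /= => sab; rewrite derive1E.
    have [_ ->] := phi_derive s sab.
    rewrite mulrA [x s * _]mulrC -mulrA -mulrDr mulr_ge0 ?expR_ge0 //.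
    by have := x'_ge s sab; lra.
rewrite /phi => /(lt_le_trans (mulr_gt0 (expR_gt0 (G * a)) x_a_gt0)).
by rewrite pmulr_rgt0 // expR_gt0.
Qed.

Lemma within_positive_near (I : finType) (x : I -> R -> R) (A : set R) a :
  (forall l, {within A, continuous (x l)}) -> A a -> (forall l, 0 < x l a) ->
  exists2 e, 0 < e & forall s, `|a - s| < e -> A s -> forall l, 0 < x l s.
Proof.
move=> x_cont Aa x_a_gt0.
have : \forall s \near within A (nbhs a), forall l, 0 < x l s.
  apply: filter_forall => l; apply: (cvgr_gt _ _ 0 (x_a_gt0 l)).
  by move/subspace_continuousP : (x_cont l); apply.
move=> /nbhs_ballP[e /= e_gt0 e_pos]; exists e => // s; exact: e_pos.
Qed.

Lemma positivity_continuation (I : finType) (x : I -> R -> R) (t0 T : R) :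
  (forall l, {within `[t0, T], continuous (x l)}) -> (forall l, 0 < x l t0) ->
  (forall a, t0 < a <= T ->
     (forall s, t0 <= s < a -> forall l, 0 < x l s) -> forall l, 0 < x l a) ->
  forall t, t0 <= t <= T -> forall l, 0 < x l t.
Proof.
move=> x_cont x_t0 x_step t /andP[t0t tT].
pose A := [set a | t0 <= a <= T /\
  forall s, t0 <= s <= a -> forall l, 0 < x l s].
have A_t0 : A t0.
  split=> [|s /andP[t0s st0] l]; first by rewrite lexx (le_trans t0t tT).
  by have -> : s = t0 by apply/le_anti; rewrite st0 t0s.
have A_ub : ubound A T by move=> a [/andP[_ ->]].
have A_bounded : has_ubound A by exists T.
pose a := sup A.
have t0a : t0 <= a by exact: ub_le_sup A_bounded _ A_t0.
have aT : a <= T by apply: ge_sup => //; exists t0.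
have pos_before s : t0 <= s < a -> forall l, 0 < x l s.
  move=> /andP[t0s sa] l; have [b [_ Ab] sb] := sup_gt (ex_intro _ t0 A_t0) sa.
  by apply: Ab; rewrite t0s ltW.
have pos_at l : 0 < x l a.
  have [<-|t0a'] := eqVneq t0 a; first exact: x_t0.
  by apply: x_step => //; rewrite lt_neqAle t0a' t0a aT.
have A_a : A a.
  split=> [|s /andP[t0s sa] l]; first by rewrite t0a aT.
  have [->|sa'] := eqVneq s a; first exact: pos_at.
  by apply: pos_before; rewrite t0s lt_neqAle sa' sa.
have a_eq_T : a = T.
  apply/eqP; rewrite eq_le aT /= leNgt; apply/negP => aT'.
  have a_in : `[t0, T] a by rewrite /= in_itv /= t0a aT.
  have [e e_gt0 pos_near] := within_positive_near x_cont a_in pos_at.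
  pose t' := Num.min (a + e / 2) T.
  have a_lt_t' : a < t' by rewrite lt_min aT' andbT ltrDl divr_gt0.
  have t'_le : t' <= a + e / 2 /\ t' <= T by split; rewrite ge_min lexx ?orbT.
  have : A t'.
    split=> [|s /andP[t0s st'] l].
      by rewrite (le_trans t0a (ltW a_lt_t')) t'_le.2.
    have [sa|a_lt_s] := leP s a; first by case: A_a => _; apply; rewrite t0s sa.
    apply: pos_near; last by rewrite /= in_itv /= t0s (le_trans st') ?t'_le.2.
    by case: t'_le => t'_e _; rewrite ltr_norml; apply/andP; split; lra.
  by move/(ub_le_sup A_bounded); rewrite leNgt a_lt_t'.
by case: A_a => _; apply; rewrite t0t a_eq_T.
Qed.

End RealAnalysis.

Section CompartmentalSystem.
Variable R : realType.

(* [(Z i rho)%:R * reduced_monomial Z xs x i rho] is the partial derivative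
   of monomial rho in x_i; the truncated exponent [Z i rho - 1] only matters
   when [Z i rho = 0], where that factor vanishes. *)
Definition reduced_monomial m c (Z : 'M[nat]_(m, c)) (xs x : 'cV[R]_m) i rho
  : R :=
  (xs i 0)^-1 * \prod_(l < m) (x l 0 / xs l 0) ^+ (Z l rho - (l == i)).

Lemma monomial_factor m c (Z : 'M[nat]_(m, c)) (xs x : 'cV[R]_m) i rho :
  (Z i rho)%:R * monomials Z xs x rho 0
  = x i 0 * ((Z i rho)%:R * reduced_monomial Z xs x i rho).
Proof.
rewrite mxE /reduced_monomial; case E : (Z i rho) => [|k].
  by rewrite !mul0r mulr0.
rewrite (bigD1 i) //= [in RHS](bigD1 i) //= eqxx E subn1 /=.
rewrite (eq_bigr (fun l => (x l 0 / xs l 0) ^+ (Z l rho - (l == i)))).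
  by rewrite exprS; ring.
by move=> l /negbTE ->; rewrite subn0.
Qed.

Definition reaction_loss_rate m c r (Z : 'M[nat]_(m, c)) (B : 'M[R]_(c, r))
    (kappa : 'rV[R]_r) (xs x : 'cV[R]_m) i : R :=
  \sum_j kappa 0 j *
    \sum_rho `|B rho j| * ((Z i rho)%:R * reduced_monomial Z xs x i rho).

Lemma reaction_field_ge m c r (Z : 'M[nat]_(m, c)) (B : 'M[R]_(c, r))
    (kappa : 'rV[R]_r) (xs x : 'cV[R]_m) i :
  is_digraph_incidence B -> (forall j, 0 <= kappa 0 j) ->
  (forall l, 0 < xs l 0) -> (forall l, 0 <= x l 0) ->
  - (x i 0 * reaction_loss_rate Z B kappa xs x i)
  <= reaction_field Z B kappa xs x i 0.
Proof.
move=> Binc kappa_ge0 xs_gt0 x_ge0.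
rewrite /reaction_field mulNmx mxE mulmx_diag_trmxE lerN2 mulr_sumr.
apply: ler_sum => j _; rewrite [X in _ <= X]mulrCA.
apply: ler_wpM2l => //; rewrite mulr_sumr.
under [X in _ <= X]eq_bigr do rewrite mulrCA -monomial_factor.
have -> : (map_mx (fun k : nat => k%:R) Z *m B) i j
    = \sum_rho B rho j * (Z i rho)%:R.
  by rewrite mxE; apply: eq_bigr => rho _; rewrite mxE mulrC.
have -> : (B^T *m monomials Z xs x) j 0
    = \sum_rho B rho j * monomials Z xs x rho 0.
  by rewrite mxE; apply: eq_bigr => rho _; rewrite mxE.
apply: incidence_sum_mul_le => [|rho|rho]; first exact: Binc.
  exact: ler0n.
rewrite mxE; apply: prodr_ge0 => l _.
by rewrite exprn_ge0 // divr_ge0 // ltW.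
Qed.

Definition diffusion_loss_rate N Ne m (s0 : 'rV[R]_N) (s1 : 'rV[R]_Ne)
    (M : 'M[R]_(Ne * m)) (xs : 'cV[R]_m) v i : R :=
  (s0 0 v)^-1 * (xs i 0)^-1 *
    \sum_e s1 0 e * M (mxtens_index (e, i)) (mxtens_index (e, i)).

Lemma diffusion_entry_le N Ne m (d : 'M[R]_(Ne, N)) (s0 : 'rV[R]_N)
    (s1 : 'rV[R]_Ne) (M : 'M[R]_(Ne * m)) (xs : 'cV[R]_m)
    (Y : 'cV[R]_(N * m)) v i :
  is_digraph_incidence d^T -> (forall v, 0 < s0 0 v) ->
  (forall e, 0 <= s1 0 e) -> is_diag_mx M -> (forall l, 0 <= M l l) ->
  (forall i, 0 < xs i 0) -> (forall l, 0 <= Y l 0) ->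
  ((invmx (diag_mx s0) *t (1%:M : 'M[R]_m)) *m (d *t (1%:M : 'M[R]_m))^T
      *m (diag_mx s1 *t (1%:M : 'M[R]_m)) *m M *m (d *t (1%:M : 'M[R]_m))
      *m cwdiv Y (stack_const N xs)) (mxtens_index (v, i)) 0
  <= Y (mxtens_index (v, i)) 0 * diffusion_loss_rate s0 s1 M xs v i.
Proof.
move=> dinc s0_gt0 s1_ge0 M_diag M_ge0 xs_gt0 Y_ge0.
rewrite diffusion_entry // => [|w]; last by rewrite gt_eqF.
pose u w := Y (mxtens_index (w, i)) 0 / xs i 0.
have u_ge0 w : 0 <= u w by rewrite divr_ge0 // ltW.
under eq_bigr do under eq_bigr do rewrite !mxE mxtens_indexK -/(u _).
have -> : Y (mxtens_index (v, i)) 0 * diffusion_loss_rate s0 s1 M xs v i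
    = (s0 0 v)^-1 *
      \sum_e s1 0 e * M (mxtens_index (e, i)) (mxtens_index (e, i)) * u v.
  by rewrite -mulr_suml /u /diffusion_loss_rate; ring.
apply: ler_wpM2l; first by rewrite invr_ge0 ltW.
apply: ler_sum => e _; rewrite mulrCA.
apply: ler_wpM2l; first by rewrite mulr_ge0.
apply: incidence_mul_sum_le => //.
by have [s [t [st dE]]] := dinc e; exists s, t; split => // w; rewrite -dE mxE.
Qed.

Definition rd_loss_rate m c r N Ne (Z : 'M[nat]_(m, c)) (B : 'M[R]_(c, r))
    (kappa : 'rV[R]_r) (xs : 'cV[R]_m) (s0 : 'rV[R]_N) (s1 : 'rV[R]_Ne)
    (Rd : 'cV[R]_(N * m) -> 'M[R]_(Ne * m)) (Y : 'cV[R]_(N * m)) v i : R :=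
  diffusion_loss_rate s0 s1 (Rd Y) xs v i
  + reaction_loss_rate Z B kappa xs (block Y v) i.

Lemma rd_field_ge m c r N Ne (Z : 'M[nat]_(m, c)) (B : 'M[R]_(c, r))
    (kappa : 'rV[R]_r) (xs : 'cV[R]_m) (d : 'M[R]_(Ne, N)) (s0 : 'rV[R]_N)
    (s1 : 'rV[R]_Ne) (Rd : 'cV[R]_(N * m) -> 'M[R]_(Ne * m))
    (Y : 'cV[R]_(N * m)) v i :
  is_digraph_incidence B -> (forall j, 0 <= kappa 0 j) ->
  (forall i, 0 < xs i 0) -> is_digraph_incidence d^T ->
  (forall v, 0 < s0 0 v) -> (forall e, 0 <= s1 0 e) ->
  is_diag_mx (Rd Y) -> (forall l, 0 <= Rd Y l l) -> (forall l, 0 <= Y l 0) ->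
  - (Y (mxtens_index (v, i)) 0 * rd_loss_rate Z B kappa xs s0 s1 Rd Y v i)
  <= rd_field Z B kappa xs d s0 s1 Rd Y (mxtens_index (v, i)) 0.
Proof.
move=> Binc kappa_ge0 xs_gt0 dinc s0_gt0 s1_ge0 Rd_diag Rd_ge0 Y_ge0.
rewrite /rd_field mulrDr opprD mxE [stack_apply _ _ _ _]mxE mxtens_indexK /=.
apply: lerD; first by rewrite mxE lerN2; exact: diffusion_entry_le.
have -> : Y (mxtens_index (v, i)) 0 = block Y v i 0 by rewrite mxE.
by apply: reaction_field_ge => // l; rewrite mxE.
Qed.

Lemma rd_loss_rate_cvg m c r N Ne (Z : 'M[nat]_(m, c)) (B : 'M[R]_(c, r))
    (kappa : 'rV[R]_r) (xs : 'cV[R]_m) (s0 : 'rV[R]_N) (s1 : 'rV[R]_Ne)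
    (Rd : 'cV[R]_(N * m) -> 'M[R]_(Ne * m)) v i (T : Type)
    (F : set_system T) {FF : Filter F} (Y : T -> 'cV[R]_(N * m))
    (Y0 : 'cV[R]_(N * m)) :
  continuous Rd -> Y @ F --> Y0 ->
  (fun t => rd_loss_rate Z B kappa xs s0 s1 Rd (Y t) v i) @ F
  --> rd_loss_rate Z B kappa xs s0 s1 Rd Y0 v i.
Proof.
move=> Rd_cont Y_cvg.
have Y_entry_cvg k : (fun t => Y t k 0) @ F --> Y0 k 0.
  exact: cvg_comp _ _ Y_cvg (@coord_continuous R _ _ k 0 Y0).
have Rd_entry_cvg k : (fun t => Rd (Y t) k k) @ F --> Rd Y0 k k.
  exact: cvg_comp _ _ (cvg_comp _ _ Y_cvg (Rd_cont Y0))
    (@coord_continuous R _ _ k k (Rd Y0)).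
have cvgXn (f : T -> R) (a : R) n :
    f @ F --> a -> (fun t => f t ^+ n) @ F --> a ^+ n.
  by move=> f_cvg; exact: cvg_comp _ _ f_cvg (@exprn_continuous R n a).
rewrite /rd_loss_rate /diffusion_loss_rate /reaction_loss_rate.
apply: cvgD.
  apply: cvgM; first exact: cvg_cst.
  apply: (cvg_big add_continuous) => e _.
  by apply: cvgM; [exact: cvg_cst | exact: Rd_entry_cvg].
apply: (cvg_big add_continuous) => j _; apply: cvgM; first exact: cvg_cst.
apply: (cvg_big add_continuous) => rho _; apply: cvgM; first exact: cvg_cst.
apply: cvgM; first exact: cvg_cst.
apply: cvgM; first exact: cvg_cst.
apply: (cvg_big mul_continuous) => l _.
apply: cvgXn; apply: cvgM; last exact: cvg_cst.
rewrite mxE; under eq_cvg do rewrite mxE.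
exact: Y_entry_cvg.
Qed.

Lemma rd_loss_rate_bounded m c r N Ne (Z : 'M[nat]_(m, c))
    (B : 'M[R]_(c, r)) (kappa : 'rV[R]_r) (xs : 'cV[R]_m) (s0 : 'rV[R]_N)
    (s1 : 'rV[R]_Ne) (Rd : 'cV[R]_(N * m) -> 'M[R]_(Ne * m))
    (X : R -> 'cV[R]_(N * m)) (a b : R) v i :
  continuous Rd ->
  (forall k, {within `[a, b], continuous (fun t => X t k 0)}) ->
  exists G, forall s, a <= s <= b ->
    rd_loss_rate Z B kappa xs s0 s1 Rd (X s) v i <= G.
Proof.
move=> Rd_cont X_cont.
apply: continuous_bounded_above_itv; apply/subspace_continuousP => s s_in.
apply: rd_loss_rate_cvg => //; apply: cvg_mx_entrywise => k j.
by rewrite (ord1 j); move/subspace_continuousP : (X_cont k); apply.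
Qed.

End CompartmentalSystem.


Theorem corollary6 (R : realType) (m c r N Ne : nat)
  (Z : 'M[nat]_(m, c)) (B : 'M[R]_(c, r)) (kappa : 'rV[R]_r)
  (xs : 'cV[R]_m) (d : 'M[R]_(Ne, N)) (s0 : 'rV[R]_N) (s1 : 'rV[R]_Ne)
  (Rd : 'cV[R]_(N * m) -> 'M[R]_(Ne * m)) (alpha : R)
  (X : R -> 'cV[R]_(N * m)) (T : R) :
  is_digraph_incidence B ->
  (forall j, 0 < kappa 0 j) ->
  (forall i, 0 < xs i 0) ->
  is_digraph_incidence d^T ->
  (forall v, 0 < s0 0 v) ->
  (forall e, 0 < s1 0 e) ->
  0 < alpha ->
  (forall Y, is_diag_mx (Rd Y)) ->
  (forall Y k, alpha <= Rd Y k k) ->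
  (forall Y, differentiable Rd Y) ->
  (forall w, continuous ('D_w Rd)) ->
  (forall k, {within `[0, T], continuous (fun t : R => (X t k 0 : R))}) ->
  (forall t, 0 < t < T -> forall k,
      is_derive t 1 (fun s => X s k 0)
        (rd_field Z B kappa xs d s0 s1 Rd (X t) k 0)) ->
  (forall k, 0 < X 0 k 0) ->
  forall t, 0 <= t <= T -> forall k, 0 < X t k 0.
Proof.
(* Continuity of Rd suffices. *)
move=> Binc kappa_gt0 xs_gt0 dinc s0_gt0 s1_gt0 alpha_gt0 Rd_diag Rd_ge
  Rd_diff _ X_cont X_derive X0_gt0.
have Rd_ge0 Y l : 0 <= Rd Y l l := le_trans (ltW alpha_gt0) (Rd_ge Y l).
have Rd_cont : continuous Rd by move=> Y; exact: differentiable_continuous.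
have kappa_ge0 j : 0 <= kappa 0 j by exact/ltW.
have s1_ge0 e : 0 <= s1 0 e by exact/ltW.
apply: (positivity_continuation (x := fun k s => X s k 0)) => //.
move=> a /andP[a_gt0 aT] X_pos k; case: (mxtens_indexP k) => v i.
have [G rate_le] := rd_loss_rate_bounded Z B kappa xs s0 s1 v i Rd_cont X_cont.
pose x s := X s (mxtens_index (v, i)) 0.
pose x' s := rd_field Z B kappa xs d s0 s1 Rd (X s) (mxtens_index (v, i)) 0.
apply: (@derive_ge_linear_gt0 _ x x' G 0 a (ltW a_gt0)); last exact: X0_gt0.
- apply: continuous_subspaceW (X_cont _) => s.
  by rewrite /= !in_itv /= => /andP[-> /le_trans]; apply.
- move=> s /andP[s_gt0 sa]; apply: X_derive.
  by rewrite s_gt0 (lt_le_trans sa aT).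
move=> s /andP[s_gt0 sa].
have X_ge0 l : 0 <= X s l 0 by apply/ltW/X_pos; rewrite (ltW s_gt0) sa.
rewrite /x /x'; apply: le_trans _ (rd_field_ge Z v i Binc kappa_ge0 xs_gt0
  dinc s0_gt0 s1_ge0 (Rd_diag (X s)) (Rd_ge0 (X s)) X_ge0).
rewrite lerN2 mulrC; apply: ler_wpM2r => //; apply: rate_le.
by rewrite (ltW s_gt0) (le_trans (ltW sa) aT).
Qed.
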